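(* Let $\Omega\subset\mathbb R^2$ be compact and contained in a ball of radius $D$. Let $n\ge 1$ be an integer and $0<\varepsilon\le 1$. Let $\nu_k=(\cos(\pi k/n),\sin(\pi k/n))$ for $0\le k<n$, and let $U_0,\dots,U_{n-1}$ be independent uniform random variables on $[0,1)$. For $x,y\in\Omega$ and $0\le k<n$ put $a_k(x,y)=\min(x\cdot\nu_k,y\cdot\nu_k)$, $b_k(x,y)=\max(x\cdot\nu_k,y\cdot\nu_k)$ and \[ N_k(x,y)=\#\{q\in\mathbb Z:\ \varepsilon(q+U_k)\in[a_k(x,y),b_k(x,y))\}. \] Then there exist constants $C_R=C_R(\Omega)\ge e$ and $C_E=C_E(\Omega)<\infty$, depending only on $\Omega$, such that, setting $R=C_R n/\varepsilon$, with probability at least $1-2R^{-10}$, \[ \sup_{x,y\in\Omega}\left|\sum_{k=0}^{n-1}\left(N_k(x,y)-\frac{b_k(x,y)-a_k(x,y)}{\varepsilon}\right)\right|\le C_E\left(\sqrt{n\log R}+\log R\right). \]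
   Context: $N_k(x,y)$ counts the lines of the randomly shifted parallel family $\{z:\ z\cdot\nu_k=\varepsilon(q+U_k),\ q\in\mathbb Z\}$ crossed by the segment from $x$ to $y$, with a half-open interval convention for endpoints. *)

From HB Require Import structures.
From mathcomp Require Import all_boot all_order all_algebra.
From mathcomp Require Import all_classical all_reals all_analysis.
From mathcomp Require Import finmap.
Set Implicit Arguments. Unset Strict Implicit. Unset Printing Implicit Defensive.
Import Order.TTheory GRing.Theory Num.Theory.
Import numFieldNormedType.Exports.
Local Open Scope classical_set_scope.
Local Open Scope ring_scope.

Definition nu {R : realType} (n k : nat) : R * R :=
  (cos (pi * k%:R / n%:R), sin (pi * k%:R / n%:R)).

Definition dot2 {R : realType} (x y : R * R) : R := x.1 * y.1 + x.2 * y.2.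

Definition ak {R : realType} (n k : nat) (x y : R * R) : R :=
  Num.min (dot2 x (nu n k)) (dot2 y (nu n k)).
Definition bk {R : realType} (n k : nat) (x y : R * R) : R :=
  Num.max (dot2 x (nu n k)) (dot2 y (nu n k)).

Definition Nk {R : realType} (eps u : R) (n k : nat) (x y : R * R) : nat :=
  (#|` fset_set [set q : int | ak n k x y <= eps * (q%:~R + u) < bk n k x y] |)%fset.

Definition iid_uniform01 {R : realType} (d : measure_display)
  (T : measurableType d) (P : probability T R) (n : nat) (U : 'I_n -> T -> R)
  : Prop :=
  (forall k, measurable_fun setT (U k)) /\
  (forall k (A : set R), measurable A ->
     P (U k @^-1` A) = lebesgue_measure (A `&` `[0%R, 1%R[)) /\
  (forall A : 'I_n -> set R, (forall k, measurable (A k)) ->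
     P (\bigcap_(k in [set: 'I_n]) (U k @^-1` A k))
     = (\prod_(k < n) P (U k @^-1` A k))%E).

Set Warnings "-notation-overridden,-ambiguous-paths,-notation-incompatible-prefix".
From HB Require Import structures.
From mathcomp Require Import all_boot all_order all_algebra.
From mathcomp Require Import all_classical all_reals all_analysis.
From mathcomp Require Import finmap zify ring lra.
Import Order.TTheory GRing.Theory Num.Theory.
Import numFieldNormedType.Exports.
Local Open Scope classical_set_scope.
Local Open Scope ring_scope.
Set Implicit Arguments. Unset Strict Implicit.

(* For a fixed direction k, write l = (b_k - a_k)/eps.  The count N_k equals
   floor l or floor l + 1, the latter exactly when U_k falls into an arc of
   length frac l of the circle [0, 1); hence N_k - l is a centred Bernoulli
   variable, and Hoeffding's inequality controls the sum over k for one pair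
   (x, y).  For uniformity, x and y are rounded to a grid of mesh eps/(8n) on a
   square containing Omega: as N_k is monotone in the window [a_k, b_k), the
   count for (x, y) is squeezed between the counts of an enclosing and of an
   enclosed window built from the grid points, at a total cost of 1, and a union
   bound over the O(R^4) grid configurations finishes the proof. *)

(** * Hoeffding's inequality for independent Bernoulli variables *)

Section Hoeffding.
Variable R : realType.

Lemma expR_le_quadratic (y : R) : `|y| <= 1/2 -> expR y <= 1 + y + 2 * y ^+ 2.
Proof.
rewrite ler_norml => /andP[y_ge y_le].
have y_lt1 : 0 < 1 - y by lra.
have expRyN : (1 - y) * expR y <= 1.
  have expRNK : expR (- y) * expR y = 1 by rewrite -expRD addNr expR0.
  by rewrite -[leRHS]expRNK ler_wpM2r ?expR_ge0 ?expR_ge1Dx.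
have quad : 1 <= (1 - y) * (1 + y + 2 * y ^+ 2).
  have : 0 <= y ^+ 2 * (1 - 2 * y) by rewrite mulr_ge0 ?sqr_ge0 //; lra.
  have -> : (1 - y) * (1 + y + 2 * y ^+ 2) = 1 + y ^+ 2 * (1 - 2 * y) by ring.
  lra.
by rewrite -(ler_pM2l y_lt1); apply: le_trans expRyN quad.
Qed.

Lemma bernoulli_mgf_le (p mu : R) : 0 <= p <= 1 -> `|mu| <= 1/2 ->
  \sum_(b : bool) (if b then p else 1 - p) * expR (mu * (b%:R - p))
  <= expR (2 * mu ^+ 2).
Proof.
move=> /andP[p_ge0 p_le1] mu_le; rewrite big_bool /= sub0r.
have [mu_ge mu_le'] : - (1/2) <= mu /\ mu <= 1/2 by apply/andP; rewrite -ler_norml.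
have expR_le z : `|z| <= 1 -> expR (mu * z) <= 1 + mu * z + 2 * (mu * z) ^+ 2.
  move=> z_le; apply: expR_le_quadratic; rewrite normrM.
  by apply: le_trans mu_le; rewrite ler_piMr.
have up : p * expR (mu * (1 - p)) + (1 - p) * expR (mu * - p) <=
    p * (1 + mu * (1 - p) + 2 * (mu * (1 - p)) ^+ 2) +
    (1 - p) * (1 + mu * - p + 2 * (mu * - p) ^+ 2).
  rewrite lerD // ler_wpM2l ?subr_ge0 // expR_le // ?normrN ger0_norm ?subr_ge0 //;
    lra.
apply: le_trans up (le_trans _ (expR_ge1Dx _)).
have : 0 <= mu ^+ 2 * (1 - p * (1 - p)).
  by rewrite mulr_ge0 ?sqr_ge0 //; nra.
lra.
Qed.

(* The law of independent Bernoulli(p k) variables, as weights on outcomes f. *)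
Definition bernoulli_weight n (p : 'I_n -> R) (f : {ffun 'I_n -> bool}) : R :=
  \prod_(k < n) (if f k then p k else 1 - p k).

Definition centered_sum n (p : 'I_n -> R) (f : {ffun 'I_n -> bool}) : R :=
  \sum_(k < n) ((f k)%:R - p k).

Section Weights.
Variables (n : nat) (p : 'I_n -> R).
Hypothesis p01 : forall k, 0 <= p k <= 1.

Lemma bernoulli_weight_ge0 f : 0 <= bernoulli_weight p f.
Proof. by apply: prodr_ge0 => k _; case: (f k); have := p01 k; lra. Qed.

Lemma norm_centered_sum_le f : `|centered_sum p f| <= n%:R.
Proof.
rewrite -[n in n%:R]card_ord -sumr_const.
apply: le_trans (ler_norm_sum _ _ _) (ler_sum _ _) => k _.
by have := p01 k; case: (f k); rewrite ler_norml /=; lra.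
Qed.

Lemma bernoulli_mgf_sum_le (mu s : R) : `|mu| <= 1/2 ->
  \sum_f bernoulli_weight p f * expR (mu * centered_sum p f - s)
  <= expR (- s) * expR (2 * mu ^+ 2) ^+ n.
Proof.
move=> mu_le.
have -> : \sum_f bernoulli_weight p f * expR (mu * centered_sum p f - s) =
    expR (- s) * \prod_(k < n) \sum_(b : bool)
      (if b then p k else 1 - p k) * expR (mu * (b%:R - p k)).
  rewrite bigA_distr_bigA mulr_sumr; apply: eq_bigr => f _.
  rewrite addrC expRD mulrCA mulr_sumr expR_sum -big_split.
  by congr (_ * _); apply: eq_bigr.
rewrite ler_wpM2l ?expR_ge0 // -[n in _ ^+ n]card_ord -prodr_const.
apply: ler_prod => k _; rewrite bernoulli_mgf_le // andbT big_bool /=.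
by have := p01 k => /andP[? ?]; rewrite addr_ge0 ?mulr_ge0 ?expR_ge0 ?subr_ge0.
Qed.

Lemma bernoulli_tail_le (sg lam t : R) : `|sg| = 1 -> 0 <= lam <= 1/2 ->
  \sum_(f | t < sg * centered_sum p f) bernoulli_weight p f
  <= expR (- (lam * t)) * expR (2 * lam ^+ 2) ^+ n.
Proof.
move=> sg1 /andP[lam_ge0 lam_le].
have mu_le : `|lam * sg| <= 1/2 by rewrite normrM sg1 mulr1 ger0_norm.
have sq_sg : (lam * sg) ^+ 2 = lam ^+ 2.
  by rewrite exprMn -(real_normK (num_real sg)) sg1 expr1n mulr1.
rewrite -sq_sg; apply: le_trans (bernoulli_mgf_sum_le (lam * t) mu_le).
rewrite big_mkcond /=; apply: ler_sum => f _.
have w_ge0 := bernoulli_weight_ge0 f.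
case: ifP => [t_lt|_]; last by rewrite mulr_ge0 ?expR_ge0.
rewrite -[leLHS]mulr1 ler_wpM2l // (le_trans _ (expR_ge1Dx _)) //.
have : 0 <= lam * (sg * centered_sum p f - t) by rewrite mulr_ge0 // subr_ge0 ltW.
rewrite mulrBr mulrA; lra.
Qed.

Lemma hoeffding_bernoulli (t : R) : (0 < n)%N -> 0 <= t ->
  \sum_(f | t < `|centered_sum p f|) bernoulli_weight p f
  <= 2 * expR (- (t ^+ 2 / (8 * n%:R))).
Proof.
move=> n_gt0 t_ge0; have n_gt0' : (0 : R) < n%:R by rewrite ltr0n.
have [t_le|n_lt] := leP t n%:R; last first.
  rewrite big_pred0 ?mulr_ge0 ?expR_ge0 // => f.
  by apply/negbTE; rewrite -leNgt (le_trans (norm_centered_sum_le f)) ?ltW.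
pose lam := t / (4 * n%:R).
have lam01 : 0 <= lam <= 1/2.
  apply/andP; split; first by rewrite divr_ge0 // mulr_ge0 // ltW.
  by rewrite ler_pdivrMr ?mulr_gt0 //; lra.
have tailE : expR (- (lam * t)) * expR (2 * lam ^+ 2) ^+ n =
    expR (- (t ^+ 2 / (8 * n%:R))).
  by rewrite -expRM_natl -expRD /lam; congr expR; field; rewrite lt0r_neq0.
have split_abs f : (t < `|centered_sum p f|) =
    (t < 1 * centered_sum p f) || (t < -1 * centered_sum p f).
  by rewrite mul1r mulN1r ltr_normr.
rewrite mulr2n mulrDl mul1r -tailE.
apply: le_trans _ (lerD (bernoulli_tail_le t (normr1 _) lam01)
                        (bernoulli_tail_le t (normrN1 _) lam01)).
rewrite [leLHS]big_mkcond [X in _ <= X + _]big_mkcond [X in _ <= _ + X]big_mkcond.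
rewrite -big_split /=; apply: ler_sum => f _.
rewrite split_abs; have w_ge0 := bernoulli_weight_ge0 f.
by case: (t < _ * _); case: (t < _ * _); rewrite /= ?addr0 ?add0r ?lerDl ?lexx.
Qed.
End Weights.
End Hoeffding.

(** * Lattice points in a window *)

Lemma card_int_itv (A B : int) :
  ((#|` fset_set [set q : int | A <= q < B]|)%fset)%:Z = Num.max 0 (B - A).
Proof.
have [AB|BA] := leP A B; last first.
  have -> : [set q : int | A <= q < B] = set0.
    by apply/seteqP; split => q //= /andP[]; lia.
  by rewrite fset_set0 cardfs0 max_l // subr_le0 ltW.
have -> : [set q : int | A <= q < B] = (fun i : nat => A + i%:Z) @` `I_`|B - A|%N.
  apply/seteqP; split => q /=.
    by move=> /andP[Aq qB]; exists `|q - A|%N => /=; lia.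
  by case=> i /= iN <-; lia.
rewrite fset_set_image; last exact: finite_II.
rewrite card_imfset; last by move=> i j /= /addrI [].
rewrite fset_set_II card_imfset /= ?size_enum_ord; last exact: val_inj.
by rewrite max_r ?subr_ge0 //; lia.
Qed.

Section LatticeCount.
Variable R : realType.

Definition fracr (x : R) : R := x - (Num.floor x)%:~R.

Lemma fracr_itv (x : R) : 0 <= fracr x < 1.
Proof. by have := floor_itv x; rewrite /fracr intrD /=; lra. Qed.

Lemma fracr_floor_def (x : R) (m : int) : m%:~R <= x < (m + 1)%:~R -> fracr x = x - m%:~R.
Proof. by move=> /floor_def; rewrite /fracr => ->. Qed.

Lemma fracrDz (x : R) (m : int) : fracr (x + m%:~R) = fracr x.
Proof. by rewrite /fracr floorDrz ?intr_int // intrKfloor intrD; ring. Qed.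

Lemma ceilD (x l : R) :
  Num.ceil (x + l) = Num.ceil x + Num.floor l + (nat_of_bool (fracr (- x) < fracr l))%:Z.
Proof.
have ceilE : (Num.ceil x)%:~R = x + fracr (- x).
  by rewrite /fracr ceilNfloor mulrNz; ring.
have -> : x + l = (Num.ceil x + Num.floor l)%:~R + (fracr l - fracr (- x)).
  by rewrite intrD ceilE /fracr; ring.
rewrite addrC ceilDrz ?intr_int // intrKceil addrC; congr (_ + _); apply: ceil_def.
have := fracr_itv l; have := fracr_itv (- x).
by have [|] := ltP (fracr (- x)) (fracr l); rewrite /= ?subrr ?sub0r ?intrN; lra.
Qed.

(* [Nk eps u n k x y] is [lattice_count eps u (ak n k x y) (bk n k x y)] by definition. *)
Definition lattice_count (eps u a b : R) : nat :=
  (#|` fset_set [set q : int | a <= eps * (q%:~R + u) < b]|)%fset.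

Lemma lattice_countE (eps u a b : R) : 0 < eps ->
  (lattice_count eps u a b)%:Z
  = Num.max 0 (Num.ceil (b / eps - u) - Num.ceil (a / eps - u)).
Proof.
move=> eps_gt0; rewrite -card_int_itv /lattice_count.
suff -> : [set q : int | a <= eps * (q%:~R + u) < b] =
    [set q | Num.ceil (a / eps - u) <= q < Num.ceil (b / eps - u)] by [].
apply/seteqP; split => q /=; rewrite ceil_le_int ceil_gt_int lerBlDr ltrBrDr
  -ler_pdivrMl // -ltr_pdivlMl // [a / _]mulrC [b / _]mulrC; exact: id.
Qed.

Lemma lattice_count_sub (eps u a b : R) : 0 < eps -> a <= b ->
  (lattice_count eps u a b)%:R - (b - a) / eps =
  (nat_of_bool (fracr (u - a / eps) < fracr ((b - a) / eps)))%:R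
  - fracr ((b - a) / eps).
Proof.
move=> eps_gt0 ab; set l := (b - a) / eps.
have l_ge0 : 0 <= l by rewrite divr_ge0 ?subr_ge0 // ltW.
have := lattice_countE u a b eps_gt0.
have -> : b / eps - u = (a / eps - u) + l by rewrite /l mulrBl; ring.
rewrite ceilD opprB [X in Num.max 0 X]addrC !addrA addNr add0r.
rewrite max_r ?addr_ge0 ?floor_ge0 // => countE.
by rewrite pmulrn countE intrD -pmulrn /fracr; ring.
Qed.

Lemma lattice_count_le (eps u a b a' b' : R) : 0 < eps -> a' <= a -> b <= b' ->
  (lattice_count eps u a b <= lattice_count eps u a' b')%N.
Proof.
move=> eps_gt0 a'a bb'.
rewrite -lez_nat (lattice_countE u a b eps_gt0) (lattice_countE u a' b' eps_gt0).
have ceil_le x y : x <= y -> Num.ceil (x / eps - u) <= Num.ceil (y / eps - u).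
  by move=> xy; rewrite le_ceil // lerD2r ler_pM2r ?invr_gt0.
by rewrite ge_max !le_max lexx /= (lerB (ceil_le _ _ bb') (ceil_le _ _ a'a)) orbT.
Qed.

Lemma lattice_count_eq0 (eps u a b : R) : 0 < eps -> b <= a -> lattice_count eps u a b = 0%N.
Proof.
move=> eps_gt0 ba; apply/eqP; rewrite -eqz_nat (lattice_countE u a b eps_gt0) max_l //.
by rewrite subr_le0 le_ceil // lerD2r ler_pM2r ?invr_gt0.
Qed.

Definition arc_set (p s : R) : set R := `[0, p - s[ `|` `[1 - s, 1 + p - s[.

Lemma arc_setE (p y u : R) : p <= 1 -> 0 <= u < 1 ->
  arc_set p (fracr y) u = (fracr (u + y) < p : Prop).
Proof.
move=> p_le1 /andP[u_ge0 u_lt1]; have /andP[s_ge0 s_lt1] := fracr_itv y.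
have -> : fracr (u + y) = fracr (u + fracr y).
  by rewrite -(fracrDz (u + fracr y) (Num.floor y)) /fracr; congr fracr; ring.
rewrite /arc_set /= !in_itv /=; apply/propext.
have [us_lt1|us_ge1] := ltP (u + fracr y) 1.
  rewrite (@fracr_floor_def (u + fracr y) 0) ?subr0; last by rewrite add0r; lra.
  by split; [case=> /andP[]; lra | move=> ?; left; apply/andP; split; lra].
rewrite (@fracr_floor_def (u + fracr y) 1); last by rewrite intrD; lra.
by split; [case=> /andP[]; lra | move=> ?; right; apply/andP; split; lra].
Qed.

(* By [lattice_count_sub] and [arc_setE], the window [a, b) holds
   floor ((b - a) / eps) + 1 points exactly when u lies in this arc, of length
   frac ((b - a) / eps). *)
Definition roundup_set (eps a b : R) : set R :=
  arc_set (fracr ((b - a) / eps)) (fracr (- (a / eps))).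

Definition roundup_dev (eps u a b : R) : R :=
  (`[< roundup_set eps a b u >])%:R - fracr ((b - a) / eps).

Lemma lattice_count_dev (eps u a b : R) : 0 < eps -> a <= b -> 0 <= u < 1 ->
  (lattice_count eps u a b)%:R - (b - a) / eps = roundup_dev eps u a b.
Proof.
move=> eps_gt0 ab u01; have /andP[_ /ltW p_le1] := fracr_itv ((b - a) / eps).
by rewrite lattice_count_sub // /roundup_dev /roundup_set arc_setE ?asboolb.
Qed.

(* Windows built from approximations a', b' (within r) of the endpoints of [a, b):
   the outer one contains [a, b), the inner one is contained in [a, b) or empty,
   and both lengths are within 4 r of b - a. *)
Definition window_lo (r a : R) (outer : bool) : R := if outer then a - r else a + r.

Definition window_hi (r a b : R) (outer : bool) : R :=
  if outer then b + r else Num.max (a + r) (b - r).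

Section Windows.
Variables (eps u r a b a' b' : R).

Lemma count_dev_le_outer : 0 < eps -> a <= b -> 0 <= u < 1 ->
  `|a - a'| <= r -> `|b - b'| <= r ->
  (lattice_count eps u a b)%:R - (b - a) / eps
  <= roundup_dev eps u (window_lo r a' true) (window_hi r a' b' true) + 4 * r / eps.
Proof.
rewrite /window_lo /window_hi !ler_norml => eps_gt0 ab u01.
move=> /andP[a'_le a'_ge] /andP[b'_le b'_ge].
have window_le : a' - r <= b' + r by lra.
rewrite -lattice_count_dev //.
have : (lattice_count eps u a b)%:R <= (lattice_count eps u (a' - r) (b' + r))%:R :> R.
  by rewrite ler_nat lattice_count_le //; lra.
have : (b' + r - (a' - r)) / eps <= (b - a) / eps + 4 * r / eps.
  by rewrite -mulrDl ler_pM2r ?invr_gt0 //; lra.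
lra.
Qed.

Lemma count_dev_ge_inner : 0 < eps -> 0 <= u < 1 ->
  `|a - a'| <= r -> `|b - b'| <= r ->
  roundup_dev eps u (window_lo r a' false) (window_hi r a' b' false) - 4 * r / eps
  <= (lattice_count eps u a b)%:R - (b - a) / eps.
Proof.
rewrite /window_lo /window_hi !ler_norml => eps_gt0 u01.
move=> /andP[a'_le a'_ge] /andP[b'_le b'_ge].
rewrite -lattice_count_dev ?le_max ?lexx //.
have : (lattice_count eps u (a' + r) (Num.max (a' + r) (b' - r)))%:R
    <= (lattice_count eps u a b)%:R :> R.
  rewrite ler_nat; have [le|/ltW le] := leP (a' + r) (b' - r).
    by rewrite lattice_count_le //; lra.
  by rewrite lattice_count_eq0.
have max_ge : b' - r <= Num.max (a' + r) (b' - r) by rewrite le_max lexx orbT.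
have : (b - a) / eps - 4 * r / eps <= (Num.max (a' + r) (b' - r) - (a' + r)) / eps.
  by rewrite -mulrBl ler_pM2r ?invr_gt0 //; lra.
lra.
Qed.
End Windows.

End LatticeCount.

(** * Probabilistic estimates *)

Section ArcMeasure.
Variable R : realType.

Lemma lebesgue_measure_itv_co (a b : R) : a <= b ->
  lebesgue_measure (`[a, b[ : set R) = (b - a)%:E.
Proof.
move=> ab; rewrite lebesgue_measure_itv /= lte_fin.
have [a_lt_b|b_le_a] := ltP a b; first by rewrite EFinB.
suff -> : b = a by rewrite subrr.
by apply/eqP; rewrite eq_le b_le_a ab.
Qed.

Lemma measurable_arc_set (p s : R) : measurable (arc_set p s).
Proof. by rewrite /arc_set; apply: measurableU; exact: measurable_itv. Qed.

Lemma lebesgue_arc_set (p s : R) : 0 <= p < 1 -> 0 <= s < 1 ->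
  lebesgue_measure (arc_set p s `&` `[0, 1[) = p%:E.
Proof.
move=> /andP[p_ge0 p_lt1] /andP[s_ge0 s_lt1].
have [s_le_p|p_lt_s] := leP s p; last first.
  have -> : arc_set p s `&` `[0, 1[ = (`[1 - s, 1 + p - s[%classic : set R).
    apply/seteqP; split => x /=; rewrite /arc_set /= !in_itv /=.
      by move=> [[/andP[h1 h2]|/andP[h1 h2]] /andP[h3 h4]]; apply/andP; split; lra.
    by move=> /andP[h1 h2]; split; [right|]; apply/andP; split; lra.
  by apply: eq_trans (lebesgue_measure_itv_co _) _; [lra | congr EFin; ring].
have -> : arc_set p s `&` `[0, 1[ = (`[0, p - s[%classic : set R) `|` `[1 - s, 1[.
  apply/seteqP; split => x /=; rewrite /arc_set /= !in_itv /=.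
    by move=> [[/andP[h1 h2]|/andP[h1 h2]] /andP[h3 h4]]; [left|right]; apply/andP; split; lra.
  by move=> [/andP[h1 h2]|/andP[h1 h2]]; split; try (apply/andP; split; lra);
    [left|right]; apply/andP; split; lra.
have disj : `[0, p - s[ `&` `[1 - s, 1[ = set0 :> set R.
  by apply/seteqP; split => x //=; rewrite !in_itv /= => -[/andP[h1 h2] /andP[h3 h4]]; lra.
rewrite measureU ?disj //; try exact: measurable_itv.
have ps_ge0 : 0 <= p - s by lra.
have s_le1 : 1 - s <= 1 by lra.
rewrite [X in (X + _)%E](_ : _ = (p - s - 0)%:E); last exact: lebesgue_measure_itv_co.
rewrite [X in (_ + X)%E](_ : _ = (1 - (1 - s))%:E); last exact: lebesgue_measure_itv_co.
by rewrite -EFinD; congr EFin; ring.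
Qed.
End ArcMeasure.

Lemma mem_bigsetU (T : Type) (I : finType) (Q : pred I) (F : I -> set T) w :
  (\big[setU/set0]_(i | Q i) F i) w <-> exists2 i, Q i & F i w.
Proof.
split; last by case=> i Qi Fw; rewrite (bigD1 i) //=; left.
by elim/big_rec: _ => [//|i X Qi IH [Fw|Xw]]; [exists i | exact: IH].
Qed.

Lemma measure_bigsetU_le d (T : measurableType d) (R : realType)
    (mu : {measure set T -> \bar R}) (I : finType) (Q : pred I) (F : I -> set T) :
  (forall i, measurable (F i)) ->
  (mu (\big[setU/set0]_(i | Q i) F i) <= \sum_(i | Q i) mu (F i))%E.
Proof.
move=> mF; suff [] : measurable (\big[setU/set0]_(i | Q i) F i) /\
    (mu (\big[setU/set0]_(i | Q i) F i) <= \sum_(i | Q i) mu (F i))%E by [].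
apply: (big_rec2 (fun A s => measurable A /\ (mu A <= s)%E)).
  by rewrite measure0.
move=> i A s _ [mA muA_le]; split; first exact: measurableU.
by apply: le_trans (measureU2 _ _ _) _ => //; rewrite leeD2l.
Qed.

Lemma probability_setC_ge d (T : measurableType d) (R : realType)
    (P : probability T R) (A : set T) (x : R) :
  measurable A -> (P A <= x%:E)%E -> ((1 - x)%:E <= P (~` A))%E.
Proof.
move=> mA PA_le; rewrite probability_setC //.
have PA_fin : P A \is a fin_num by rewrite ge0_fin_numE ?(le_lt_trans PA_le) ?ltry.
by rewrite -(fineK PA_fin) -EFinB lee_fin lerB // -lee_fin fineK.
Qed.

Section Sampling.
Variables (R : realType) (d : measure_display) (T : measurableType d).
Variables (P : probability T R) (n : nat) (U : 'I_n -> T -> R).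
Hypothesis U_iid : iid_uniform01 P U.

Lemma measurable_preimage_U k (A : set R) : measurable A -> measurable (U k @^-1` A).
Proof. by move=> mA; rewrite -[_ @^-1` _]setTI; apply: (U_iid.1 k). Qed.

Lemma measurable_U_out : measurable (\big[setU/set0]_(k < n) (U k @^-1` ~` `[0, 1[)).
Proof.
apply: bigsetU_measurable => k _; apply: measurable_preimage_U.
by apply: measurableC; exact: measurable_itv.
Qed.

Lemma prob_U_out : (P (\big[setU/set0]_(k < n) (U k @^-1` ~` `[0%R, 1%R[)) <= 0)%E.
Proof.
have out0 k : P (U k @^-1` ~` `[0, 1[) = 0%E.
  by rewrite U_iid.2.1 ?setICl ?measure0 //; apply: measurableC; exact: measurable_itv.
apply: le_trans (measure_bigsetU_le _ _ _) _ => [k|].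
  by apply: measurable_preimage_U; apply: measurableC; exact: measurable_itv.
by rewrite big1 // => k _; exact: out0.
Qed.

Definition outcome_event (S : 'I_n -> set R) (f : {ffun 'I_n -> bool}) : set T :=
  \bigcap_(k in [set: 'I_n]) (U k @^-1` (if f k then S k else ~` S k)).

Definition deviation_event (S : 'I_n -> set R) (p : 'I_n -> R) (t : R) : set T :=
  [set w | t < `|\sum_(k < n) ((`[< S k (U k w) >])%:R - p k)|].

Variables (S : 'I_n -> set R) (p : 'I_n -> R).
Hypotheses (mS : forall k, measurable (S k)) (PS : forall k, P (U k @^-1` S k) = (p k)%:E).

Lemma measurable_outcome_event f : measurable (outcome_event S f).
Proof.
apply: fin_bigcap_measurable => // k _; apply: measurable_preimage_U.
by case: (f k) => //; apply: measurableC.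
Qed.

Lemma prob_outcome_event f : P (outcome_event S f) = (bernoulli_weight p f)%:E.
Proof.
rewrite U_iid.2.2; last by move=> k; case: (f k) => //; apply: measurableC.
rewrite -prodEFin; apply: eq_bigr => k _; case: (f k) => //.
have PSk := PS k; rewrite /preimage in PSk.
rewrite preimage_setC probability_setC; last exact: measurable_preimage_U.
by rewrite PSk EFinB.
Qed.

Lemma deviation_eventE (t : R) :
  deviation_event S p t =
  \big[setU/set0]_(f | t < `|centered_sum p f|) outcome_event S f.
Proof.
apply/seteqP; split => w; rewrite /deviation_event /=.
  move=> t_lt; apply/mem_bigsetU; exists [ffun k => `[< S k (U k w) >]].
    by rewrite /centered_sum; under eq_bigr do rewrite ffunE.
  by move=> k _; rewrite /= ffunE; case: asboolP.
case/mem_bigsetU => f t_lt w_f.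
suff U_f k : `[< S k (U k w) >] = f k by under eq_bigr do rewrite U_f.
by have := w_f k I; rewrite /preimage /=; case: (f k) => Sw; case: asboolP.
Qed.

Lemma measurable_deviation_event (t : R) : measurable (deviation_event S p t).
Proof.
by rewrite deviation_eventE; apply: bigsetU_measurable => f _; exact: measurable_outcome_event.
Qed.

Lemma prob_deviation_event_le (t : R) : (0 < n)%N -> (forall k, 0 <= p k <= 1) -> 0 <= t ->
  (P (deviation_event S p t) <= (2 * expR (- (t ^+ 2 / (8 * n%:R))))%:E)%E.
Proof.
move=> n_gt0 p01 t_ge0; rewrite deviation_eventE.
apply: le_trans (measure_bigsetU_le _ _ measurable_outcome_event) _.
rewrite (eq_bigr (fun f => (bernoulli_weight p f)%:E)); last first.
  by move=> f _; exact: prob_outcome_event.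
by rewrite sumEFin lee_fin hoeffding_bernoulli.
Qed.
End Sampling.

(** * Discretisation *)

Section Geometry.
Variable R : realType.

Lemma norm_min_sub_le (x y x' y' r : R) : `|x - x'| <= r -> `|y - y'| <= r ->
  `|Num.min x y - Num.min x' y'| <= r.
Proof.
rewrite !ler_norml => /andP[? ?] /andP[? ?].
by case: (leP x y) => ?; case: (leP x' y') => ?; apply/andP; split; lra.
Qed.

Lemma norm_max_sub_le (x y x' y' r : R) : `|x - x'| <= r -> `|y - y'| <= r ->
  `|Num.max x y - Num.max x' y'| <= r.
Proof.
rewrite !ler_norml => /andP[? ?] /andP[? ?].
by case: (leP x y) => ?; case: (leP x' y') => ?; apply/andP; split; lra.
Qed.

Lemma norm_dot2_nu_sub_le n k (x x' : R * R) (h : R) :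
  `|x.1 - x'.1| <= h -> `|x.2 - x'.2| <= h ->
  `|dot2 x (nu n k) - dot2 x' (nu n k)| <= 2 * h.
Proof.
move=> x1_le x2_le; rewrite /dot2 /nu /=; set C := cos _; set S := sin _.
have -> : x.1 * C + x.2 * S - (x'.1 * C + x'.2 * S) = (x.1 - x'.1) * C + (x.2 - x'.2) * S.
  by ring.
have C_le : `|C| <= 1 by rewrite ler_norml cos_geN1 cos_le1.
have S_le : `|S| <= 1 by rewrite ler_norml sin_geN1 sin_le1.
rewrite (le_trans (ler_normD _ _)) // !normrM.
have xC_le : `|x.1 - x'.1| * `|C| <= h by rewrite -[h]mulr1 ler_pM.
have xS_le : `|x.2 - x'.2| * `|S| <= h by rewrite -[h]mulr1 ler_pM.
lra.
Qed.

Lemma ak_le_bk n k (x y : R * R) : ak n k x y <= bk n k x y.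
Proof. by rewrite /ak /bk ge_min !le_max lexx. Qed.

Lemma ak_bk_lipschitz n k (x y x' y' : R * R) (h : R) :
  `|x.1 - x'.1| <= h -> `|x.2 - x'.2| <= h ->
  `|y.1 - y'.1| <= h -> `|y.2 - y'.2| <= h ->
  `|ak n k x y - ak n k x' y'| <= 2 * h /\ `|bk n k x y - bk n k x' y'| <= 2 * h.
Proof.
move=> x1 x2 y1 y2; have dx := norm_dot2_nu_sub_le n k x1 x2.
have dy := norm_dot2_nu_sub_le n k y1 y2.
by split; [exact: norm_min_sub_le | exact: norm_max_sub_le].
Qed.

Lemma norm_le_sqr_sum (a b rho : R) : 0 <= rho ->
  a ^+ 2 + b ^+ 2 <= rho ^+ 2 -> `|a| <= rho.
Proof.
move=> rho_ge0 sum_le.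
rewrite -(@ler_pXn2r _ 2) ?nnegrE ?normr_ge0 // real_normK ?num_real //.
by apply: le_trans sum_le; rewrite lerDl sqr_ge0.
Qed.

Lemma exists_grid_index (z c rho h : R) : 0 < h -> `|z - c| <= rho ->
  exists i : nat, i%:R <= 2 * rho / h /\ `|z - (c - rho + i%:R * h)| <= h.
Proof.
move=> h_gt0; rewrite ler_norml => /andP[z_ge z_le].
have x_ge0 : 0 <= (z - c + rho) / h by rewrite divr_ge0 ?(ltW h_gt0) //; lra.
have /andP[i_le i_gt] := truncn_itv x_ge0.
exists (Num.truncn ((z - c + rho) / h)); split.
  by apply: le_trans i_le _; rewrite ler_pM2r ?invr_gt0 //; lra.
move: i_le i_gt; set i := Num.truncn _.
rewrite ler_pdivlMr // ltr_pdivrMr // -natr1 mulrDl mul1r.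
by rewrite ler_norml => ? ?; apply/andP; split; lra.
Qed.
End Geometry.

Section UniformDeviation.
Variables (R : realType) (c : R * R) (rho eps : R) (n : nat).
Hypotheses (rho_ge0 : 0 <= rho) (eps_gt0 : 0 < eps) (n_gt0 : (0 < n)%N).

(* Rounding x and y to the grid moves each projection by at most r = 2 grid_step
   and each window length by at most 4 r = eps / n, i.e. by 1/n lattice points;
   over the n directions this costs 1 in total. *)
Definition grid_step : R := eps / (8 * n%:R).

Definition grid_size : nat := (Num.truncn (16 * rho * n%:R / eps)).+1.

Local Notation grid := ('I_grid_size * 'I_grid_size)%type.
Local Notation config := (grid * grid * bool)%type.

Definition grid_point (ij : grid) : R * R :=
  (c.1 - rho + ij.1%:R * grid_step, c.2 - rho + ij.2%:R * grid_step).

Definition in_box (z : R * R) := `|z.1 - c.1| <= rho /\ `|z.2 - c.2| <= rho.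

Lemma grid_step_gt0 : 0 < grid_step.
Proof. by rewrite divr_gt0 // mulr_gt0 // ltr0n. Qed.

Lemma grid_point_near z : in_box z -> exists ij : grid,
  `|z.1 - (grid_point ij).1| <= grid_step /\ `|z.2 - (grid_point ij).2| <= grid_step.
Proof.
have idx_lt i : i%:R <= 2 * rho / grid_step -> (i < grid_size)%N.
  have -> : 2 * rho / grid_step = 16 * rho * n%:R / eps.
    by rewrite /grid_step; field; rewrite !lt0r_neq0 ?ltr0n.
  move=> i_le; rewrite ltnS truncn_ge_nat //.
  by apply: divr_ge0; [rewrite !mulr_ge0 | exact: ltW].
case=> z1 z2.
have [i [/idx_lt i_lt near_i]] := exists_grid_index grid_step_gt0 z1.
have [j [/idx_lt j_lt near_j]] := exists_grid_index grid_step_gt0 z2.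
by exists (Ordinal i_lt, Ordinal j_lt).
Qed.

Definition config_lo (cf : config) (k : 'I_n) : R :=
  window_lo (2 * grid_step) (ak n k (grid_point cf.1.1) (grid_point cf.1.2)) cf.2.

Definition config_hi (cf : config) (k : 'I_n) : R :=
  let X := grid_point cf.1.1 in let Y := grid_point cf.1.2 in
  window_hi (2 * grid_step) (ak n k X Y) (bk n k X Y) cf.2.

Definition config_set (cf : config) (k : 'I_n) : set R :=
  roundup_set eps (config_lo cf k) (config_hi cf k).

Definition config_prob (cf : config) (k : 'I_n) : R :=
  fracr ((config_hi cf k - config_lo cf k) / eps).

Lemma sum_count_dev_le (t : R) (u : 'I_n -> R) (x y : R * R) :
  (forall k, 0 <= u k < 1) ->
  (forall cf, `|\sum_(k < n) ((`[< config_set cf k (u k) >])%:R - config_prob cf k)| <= t) ->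
  in_box x -> in_box y ->
  `|\sum_(k < n) ((Nk eps (u k) n k x y)%:R - (bk n k x y - ak n k x y) / eps)| <= t + 1.
Proof.
move=> u01 dev_le /grid_point_near[ijx [x1 x2]] /grid_point_near[ijy [y1 y2]].
pose cf (outer : bool) : config := (ijx, ijy, outer).
pose dev outer := \sum_(k < n) ((`[< config_set (cf outer) k (u k) >])%:R
                                 - config_prob (cf outer) k).
have lip k := ak_bk_lipschitz n k x1 x2 y1 y2.
have slack : \sum_(k < n) (4 * (2 * grid_step) / eps) = 1.
  rewrite sumr_const card_ord /grid_step -mulr_natl; field.
  by rewrite !lt0r_neq0 ?ltr0n.
have up : \sum_(k < n) ((Nk eps (u k) n k x y)%:R - (bk n k x y - ak n k x y) / eps)
    <= dev true + 1.
  rewrite -[X in _ <= _ + X]slack -big_split /=; apply: ler_sum => k _.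
  have [ak_near bk_near] := lip k.
  exact: (count_dev_le_outer eps_gt0 (ak_le_bk n k x y) (u01 k) ak_near bk_near).
have lo : dev false - 1 <=
    \sum_(k < n) ((Nk eps (u k) n k x y)%:R - (bk n k x y - ak n k x y) / eps).
  rewrite -[X in _ - X <= _]slack -sumrB; apply: ler_sum => k _.
  have [ak_near bk_near] := lip k.
  exact: (count_dev_ge_inner eps_gt0 (u01 k) ak_near bk_near).
move: up lo (dev_le (cf true)) (dev_le (cf false)); rewrite /dev !ler_norml.
by move=> ? ? /andP[? ?] /andP[? ?]; apply/andP; split; lra.
Qed.

Section Events.
Variables (d : measure_display) (T : measurableType d) (P : probability T R).
Variable U : 'I_n -> T -> R.
Hypothesis U_iid : iid_uniform01 P U.

Definition bad_event (t : R) : set T :=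
  \big[setU/set0]_(k < n) (U k @^-1` ~` `[0, 1[)
  `|` \big[setU/set0]_(cf : config) deviation_event U (config_set cf) (config_prob cf) t.

Lemma measurable_config_set cf k : measurable (config_set cf k).
Proof. exact: measurable_arc_set. Qed.

Lemma prob_config_set cf k : P (U k @^-1` config_set cf k) = (config_prob cf k)%:E.
Proof.
rewrite U_iid.2.1; last exact: measurable_config_set.
by apply: lebesgue_arc_set; apply: fracr_itv.
Qed.

Lemma config_prob_itv cf k : 0 <= config_prob cf k <= 1.
Proof. by have /andP[-> /ltW ->] := fracr_itv ((config_hi cf k - config_lo cf k) / eps). Qed.

Lemma measurable_bad_event (t : R) : measurable (bad_event t).
Proof.
apply: measurableU; first exact: (measurable_U_out U_iid).
apply: bigsetU_measurable => cf _; apply: (measurable_deviation_event U_iid).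
exact: measurable_config_set.
Qed.

Lemma prob_bad_event_le (t : R) : 0 <= t ->
  (P (bad_event t)
   <= ((2 * grid_size ^ 4)%:R * (2 * expR (- (t ^+ 2 / (8 * n%:R)))))%:E)%E.
Proof.
move=> t_ge0.
have mdev cf : measurable (deviation_event U (config_set cf) (config_prob cf) t).
  by apply: (measurable_deviation_event U_iid); exact: measurable_config_set.
apply: le_trans (measureU2 _ (measurable_U_out U_iid) (bigsetU_measurable _ _)) _.
  by move=> cf _; exact: mdev.
apply: le_trans (leeD (prob_U_out U_iid) (lexx _)) _; rewrite add0e.
apply: le_trans (measure_bigsetU_le _ _ mdev) _.
apply: (@le_trans _ _ (\sum_(cf : config) (2 * expR (- (t ^+ 2 / (8 * n%:R))))%:E)%E).
  apply: lee_sum => cf _; apply: (prob_deviation_event_le U_iid) => //.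
  - exact: measurable_config_set.
  - exact: prob_config_set.
  - exact: config_prob_itv.
have card_config : #|{: config}| = (2 * grid_size ^ 4)%N.
  by rewrite !card_prod !card_ord card_bool; lia.
by rewrite sumEFin sumr_const card_config lee_fin [leRHS]mulr_natl.
Qed.

Lemma not_bad_event (t : R) w : ~ bad_event t w ->
  (forall k, 0 <= U k w < 1) /\
  forall cf, `|\sum_(k < n) ((`[< config_set cf k (U k w) >])%:R - config_prob cf k)| <= t.
Proof.
move=> good; split => [k|cf].
  apply/negPn/negP => out; apply: good; left; apply/mem_bigsetU; exists k => //=.
  by rewrite in_itv; apply/negP.
rewrite leNgt; apply/negP => dev; apply: good; right; apply/mem_bigsetU.
by exists cf.
Qed.
End Events.
End UniformDeviation.

(** * Choice of the constants *)

Section Constants.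
Variable R : realType.

Lemma grid_size_le (rho eps : R) n : 0 <= rho -> 0 < eps -> eps <= 1 -> (0 < n)%N ->
  (grid_size rho eps n)%:R <= (16 * rho + 1) * (n%:R / eps).
Proof.
move=> rho_ge0 eps_gt0 eps_le1 n_gt0.
have n_eps_ge1 : 1 <= n%:R / eps.
  by rewrite ler_pdivlMr // mul1r (le_trans eps_le1) // ler1n.
have x_ge0 : 0 <= 16 * rho * n%:R / eps.
  by apply: divr_ge0; [rewrite !mulr_ge0 | exact: ltW].
have trunc_le : (Num.truncn (16 * rho * n%:R / eps))%:R <= 16 * rho * n%:R / eps.
  by rewrite truncn_le.
rewrite /grid_size; move: trunc_le; set m := Num.truncn _ => trunc_le.
rewrite -(@natr1 R m) mulrDl mul1r !mulrA; lra.
Qed.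

(* The deviation level sqrt (120 n ln x) makes each Hoeffding tail x^-15, which
   absorbs the 2 G^4 <= 2 x^4 grid configurations of [union_tail_le]. *)
Lemma expR_sqrt_tail (x : R) n : 1 <= x -> (0 < n)%N ->
  expR (- (Num.sqrt (120 * n%:R * ln x) ^+ 2 / (8 * n%:R))) = x ^- 15.
Proof.
move=> x_ge1 n_gt0; have n_gt0' : (0 : R) < n%:R by rewrite ltr0n.
rewrite sqr_sqrtr ?mulr_ge0 ?ln_ge0 // ?ler0n //.
have -> : 120 * n%:R * ln x / (8 * n%:R) = 15%:R * ln x by field; rewrite lt0r_neq0.
by rewrite expRN expRM_natl lnK // posrE (lt_le_trans ltr01 x_ge1).
Qed.

Lemma union_tail_le (G : nat) (x : R) : G%:R <= x -> 2 <= x ->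
  (2 * G ^ 4)%:R * (2 * x ^- 15) <= 2 * x ^- 10.
Proof.
move=> G_le x_ge2; have x_gt0 : 0 < x by lra.
have x4_ge0 : 0 <= x ^+ 4 by rewrite exprn_ge0 // ltW.
have G4_le : G%:R ^+ 4 <= x ^+ 4 by rewrite lerXn2r // nnegrE // ltW.
have -> : (2 * G ^ 4)%:R * (2 * x ^- 15) = (4 * G%:R ^+ 4) * x ^- 15.
  by rewrite natrM natrX; ring.
have -> : 2 * x ^- 10 = (4 * x ^+ 4 + x ^+ 4 * (2 * x - 4)) * x ^- 15.
  by field; rewrite lt0r_neq0.
rewrite ler_pM2r ?invr_gt0 ?exprn_gt0 // -[leLHS]addr0.
by apply: lerD; [rewrite ler_pM2l | rewrite mulr_ge0 //; lra].
Qed.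

Lemma sqrt_tail_le (m L : R) : 0 <= m -> 1 <= L ->
  Num.sqrt (120 * m * L) + 1 <= 12 * (Num.sqrt (m * L) + L).
Proof.
move=> m_ge0 L_ge1; have mL_ge0 : 0 <= m * L by rewrite mulr_ge0 //; lra.
have sqrt_le : Num.sqrt (120 * m * L) <= 11 * Num.sqrt (m * L).
  have le121 : 120 * (m * L) <= 11 ^+ 2 * (m * L) by rewrite ler_wpM2r //; lra.
  rewrite -mulrA (le_trans (ler_wsqrtr le121)) //.
  by rewrite sqrtrM ?sqr_ge0 // sqrtr_sqr ger0_norm.
have := sqrtr_ge0 (m * L); lra.
Qed.

Lemma ball_in_box (c z : R * R) (D : R) :
  (z.1 - c.1) ^+ 2 + (z.2 - c.2) ^+ 2 <= D ^+ 2 -> in_box c `|D| z.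
Proof.
rewrite -(real_normK (num_real D)) => z_le; have D_ge0 := normr_ge0 D.
split; first exact: norm_le_sqr_sum z_le.
by apply: (norm_le_sqr_sum (b := z.1 - c.1) D_ge0); rewrite addrC.
Qed.

Lemma scale_bounds (rho eps : R) n : 0 <= rho -> 0 < eps -> eps <= 1 -> (0 < n)%N ->
  let x := Num.max (expR 1) (16 * rho + 1) * n%:R / eps in
  expR 1 <= x /\ (grid_size rho eps n)%:R <= x.
Proof.
move=> rho_ge0 eps_gt0 eps_le1 n_gt0 x.
have n_eps_ge1 : 1 <= n%:R / eps.
  by rewrite ler_pdivlMr // mul1r (le_trans eps_le1) // ler1n.
rewrite /x -mulrA; split.
  by rewrite -[leLHS]mulr1 ler_pM // ?le_max ?lexx // expR_ge0.
apply: le_trans (grid_size_le rho_ge0 eps_gt0 eps_le1 n_gt0) _.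
by rewrite ler_wpM2r ?le_max ?lexx ?orbT // (le_trans ler01 n_eps_ge1).
Qed.
End Constants.

Unset Implicit Arguments.
Set Strict Implicit.
Theorem lemma2 (R : realType) (Omega : set (R * R)) (D : R) (c : R * R) :
  compact Omega ->
  (forall x, Omega x -> (x.1 - c.1) ^+ 2 + (x.2 - c.2) ^+ 2 <= D ^+ 2) ->
  exists CR CE : R, expR 1 <= CR /\
    forall (n : nat) (eps : R), (1 <= n)%N -> 0 < eps -> eps <= 1 ->
    forall (d : measure_display) (T : measurableType d) (P : probability T R)
           (U : 'I_n -> T -> R),
    iid_uniform01 P U ->
    let Rr := CR * n%:R / eps in
    exists E : set T, measurable E /\
      (forall w, E w -> forall x y, Omega x -> Omega y ->
         `| \sum_(k < n) ((Nk eps (U k w) n k x y)%:R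
                          - (bk n k x y - ak n k x y) / eps) |
         <= CE * (Num.sqrt (n%:R * ln Rr) + ln Rr)) /\
      ((1 - 2 * Rr ^- 10)%:E <= P E)%E.
Proof.
move=> _ Omega_ball; set rho := `|D|; have rho_ge0 : 0 <= rho := normr_ge0 D.
exists (Num.max (expR 1) (16 * rho + 1)), 12; split; first by rewrite le_max lexx.
move=> n eps n_gt0 eps_gt0 eps_le1 d T P U U_iid Rr.
have [Rr_ge_e G_le_Rr] : expR 1 <= Rr /\ (grid_size rho eps n)%:R <= Rr :=
  scale_bounds rho_ge0 eps_gt0 eps_le1 n_gt0.
have L_ge1 : 1 <= ln Rr by rewrite -(expRK 1) ler_ln ?posrE // (lt_le_trans _ Rr_ge_e).
have e_ge2 : 2 <= expR 1 :> R by have := expR_ge1Dx (1 : R); lra.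
set t := Num.sqrt (120 * n%:R * ln Rr).
exists (~` bad_event c rho eps U t); split; [|split].
- exact/measurableC/(measurable_bad_event _ _ _ U_iid).
- move=> w /not_bad_event[U01 dev_le] x y /Omega_ball/ball_in_box x_box.
  move=> /Omega_ball/ball_in_box y_box.
  apply: le_trans (sum_count_dev_le (u := fun k => U k w) rho_ge0 eps_gt0 n_gt0
    U01 dev_le x_box y_box) _.
  exact: sqrt_tail_le.
- apply: probability_setC_ge; first exact: (measurable_bad_event _ _ _ U_iid).
  apply: le_trans (prob_bad_event_le c rho_ge0 eps_gt0 n_gt0 U_iid (sqrtr_ge0 _)) _.
  by rewrite lee_fin expR_sqrt_tail ?union_tail_le //; lra.
Qed.
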